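(* Let $g_1,\dots,g_r\in\mathbb R[X_1,\dots,X_n]$ and $r_0>0$ with $r_0^2-\|\mathbf X\|_2^2\in\mathcal Q_{\ell_0}(\mathbf g)$. Then for all $t\in\mathbb N$ and $\ell\ge 2t-2+\ell_0$, every $L\in\mathcal L^{(1)}_\ell(\mathbf g)$ satisfies $$\|L^{[2t]}\|_2\le\sqrt{\binom{n+t}{t}}\ \sum_{k=0}^t r_0^{2k}.$$
   Context: $\Sigma^2$ sums of squares; $\mathcal Q_\ell(\mathbf g)=\{s_0+\sum_is_ig_i: s_j\in\Sigma^2,\deg s_0\le\ell,\deg(s_ig_i)\le\ell\}$; $\|\mathbf X\|_2^2=\sum X_i^2$. $\mathcal L^{(1)}_\ell(\mathbf g)=\{L$ linear functional on $\mathbb R[\mathbf X]_\ell$ (polynomials of degree $\le\ell$) with $L(q)\ge0$ for all $q\in\mathcal Q_\ell(\mathbf g)$ and $L(1)=1\}$. $L^{[2t]}$ is the restriction of $L$ to $\mathbb R[\mathbf X]_{2t}$, identified with the vector $(L(\mathbf X^\alpha))_{|\alpha|\le2t}$, and $\|\cdot\|_2$ is its Euclidean norm. (The paper writes $r$ for $r_0$.) *)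

From HB Require Import structures.
From mathcomp Require Import all_boot all_order all_algebra.
From mathcomp Require Import mpoly.
Set Implicit Arguments. Unset Strict Implicit. Unset Printing Implicit Defensive.
Import Order.TTheory GRing.Theory Num.Theory.
Local Open Scope ring_scope.

Section Defs.
Variables (R : rcfType) (n : nat).

Definition is_sos (p : {mpoly R[n]}) : Prop :=
  exists s : seq {mpoly R[n]}, p = \sum_(q <- s) q ^+ 2.

(* degree of p is at most l  (msize p = 1 + deg p, msize 0 = 0) *)
Definition deg_le (p : {mpoly R[n]}) (l : nat) : Prop := (msize p <= l.+1)%N.

Definition in_qmodule (r : nat) (g : 'I_r -> {mpoly R[n]}) (l : nat)
    (q : {mpoly R[n]}) : Prop :=
  exists (s0 : {mpoly R[n]}) (s : 'I_r -> {mpoly R[n]}),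
    [/\ is_sos s0, deg_le s0 l,
        (forall i, is_sos (s i) /\ deg_le (s i * g i) l)
      & q = s0 + \sum_(i < r) s i * g i].

(* A linear functional L on R[X]_l is given by its values y m = L(X^m) on
   monomials (only the values with mdeg m <= l matter); it acts on p by
   linearity. *)
Definition riesz (y : 'X_{1..n} -> R) (p : {mpoly R[n]}) : R :=
  \sum_(m <- msupp p) p@_m * y m.

Definition in_L1 (r : nat) (g : 'I_r -> {mpoly R[n]}) (l : nat)
    (y : 'X_{1..n} -> R) : Prop :=
  (forall q, in_qmodule g l q -> 0 <= riesz y q) /\ riesz y 1 = 1.

Definition sqnormX : {mpoly R[n]} := \sum_(i < n) 'X_i ^+ 2.

Definition trunc_norm (y : 'X_{1..n} -> R) (t : nat) : R :=
  Num.sqrt (\sum_(m : 'X_{1..n < (2 * t).+1}) y (val m) ^+ 2).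

End Defs.

From mathcomp Require Import all_boot all_order all_algebra.
From mathcomp Require Import mpoly ssrcomplements.
From mathcomp Require Import lra ring zify.
Import Order.TTheory GRing.Theory Num.Theory.
Local Open Scope ring_scope.
Set Implicit Arguments. Unset Strict Implicit. Unset Printing Implicit Defensive.

(* Positivity of L on squares of degree at most l gives L(X^2a) >= 0 and the
   Cauchy-Schwarz bound L(X^(a+b))^2 <= L(X^2a) L(X^2b) for |a|, |b| <= t.
   For |b| < t the polynomial X^2b (r0^2 - ||X||^2) lies in Q_l, and applying L
   to it gives sum_i L(X^2(b+e_i)) <= r0^2 L(X^2b); hence the diagonal sums
   T_k = sum_(|c| = k) L(X^2c) satisfy T_k <= r0^2k.  Splitting every |m| <= 2t
   injectively as m = a + b with |a|, |b| <= t then gives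
   ||L^[2t]||^2 <= (sum_k T_k)^2.  So ||L^[2t]|| <= sum_k r0^2k already holds
   without the binomial factor (which is >= 1), and for any real r0. *)

Lemma ler_sum_witness (F : numDomainType) (I J : finType) (P : pred I) (Q : pred J)
    (f : I -> F) (G : J -> F) (witness : J -> I -> bool) :
  (forall j, Q j -> 0 <= G j) ->
  (forall i, P i -> exists j, [/\ Q j, witness j i & f i <= G j]) ->
  (forall j i1 i2, witness j i1 -> witness j i2 -> i1 = i2) ->
  \sum_(i | P i) f i <= \sum_(j | Q j) G j.
Proof.
move=> G_ge0 has_witness witness_inj.
apply: (@le_trans _ _ (\sum_(i | P i) \sum_(j | Q j && witness j i) G j)).
  apply: ler_sum => i Pi; have [j [Qj wji fG]] := has_witness i Pi.
  rewrite (bigD1 j) /= ?Qj ?wji //; apply: (le_trans fG).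
  by rewrite lerDl; apply: sumr_ge0 => k /andP[/andP[]] *; exact: G_ge0.
rewrite (exchange_big_dep Q) /=; last by move=> i j _ /andP[].
apply: ler_sum => j Qj.
case: (pickP (fun i => P i && witness j i)) => [i0 /andP[Pi0 wi0]|none].
  rewrite (big_pred1 i0) // => i /=; apply/idP/eqP.
    by case/and3P=> _ _ wji; exact: witness_inj wji wi0.
  by move=> ->; rewrite Pi0 Qj wi0.
by rewrite big_pred0 ?G_ge0 // => i; rewrite Qj; exact: none.
Qed.

Lemma quad_ge0_sqr_le (F : realFieldType) (A B C : F) :
  (forall a b : F, 0 <= a ^+ 2 * A + 2 * a * b * C + b ^+ 2 * B) ->
  C ^+ 2 <= A * B.
Proof.
move=> quad_ge0.
have A_ge0 : 0 <= A by have := quad_ge0 1 0; rewrite expr1n; nra.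
have [A_gt0|A_le0] := ltP 0 A.
  have quad_CA := quad_ge0 (- C) A.
  have : 0 <= A * (A * B - C ^+ 2) by nra.
  by rewrite pmulr_rge0 // subr_ge0.
have A0 : A = 0 by apply/le_anti; rewrite A_le0 A_ge0.
have := quad_ge0 (- B - 1) C; have := quad_ge0 0 1.
rewrite expr1n A0 mul0r; nra.
Qed.

Lemma sum_even_powers_ge0 (F : realDomainType) (x : F) t :
  0 <= \sum_(k < t.+1) x ^+ (2 * k).
Proof. by apply: sumr_ge0 => k _; rewrite exprM exprn_ge0 ?sqr_ge0. Qed.

Section Multinomials.
Variable n : nat.
Implicit Types (a c : 'X_{1..n}).

Lemma mdeg_neq0_exists a : mdeg a != 0%N -> exists i, (0 < a i)%N.
Proof.
rewrite mdeg_eq0 => /eqP a_neq0.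
case/boolP: [exists i, (0 < a i)%N] => [/existsP //|/existsPn a0].
by case: a_neq0; apply/mnmP => i; move: (a0 i); rewrite lt0n negbK mnm0E => /eqP.
Qed.

Lemma exists_lepm_mdeg c k : (k <= mdeg c)%N -> exists2 a, (a <= c)%MM & mdeg a = k.
Proof.
elim: k => [|k IH] lt_kc.
  by exists 0%MM; [apply/mnm_lepP => i; rewrite mnm0E | exact: mdeg0].
have [a le_ac deg_a] := IH (ltnW lt_kc).
have [i lt_aci] : exists i, (a i < c i)%N.
  case/boolP: [exists i, (a i < c i)%N] => [/existsP //|/existsPn ge_ac].
  suff : (mdeg c <= mdeg a)%N by rewrite deg_a leqNgt lt_kc.
  by rewrite !mdegE; apply: leq_sum => i _; rewrite leqNgt ge_ac.
exists (a + U_(i))%MM; last by rewrite mdegD mdeg1 deg_a addn1.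
apply/mnm_lepP => j; rewrite mnmDE mnm1E.
by case: eqP => [<-|_]; [rewrite addn1 | rewrite addn0; exact: (mnm_lepP le_ac)].
Qed.

End Multinomials.

Section Polynomials.
Variables (R : rcfType) (n : nat).
Implicit Types (p q s : {mpoly R[n]}) (y : 'X_{1..n} -> R) (m : 'X_{1..n}).

Lemma rieszE y p k : (msize p <= k)%N ->
  riesz y p = \sum_(m : 'X_{1..n < k}) p@_m * y m.
Proof.
move=> le_pk; rewrite /riesz (big_mksub 'X_{1..n < k}) ?msupp_uniq //=; last first.
  by move=> m /msize_mdeg_lt /leq_trans; apply.
by rewrite big_rmcond //= => m /memN_msupp_eq0 ->; rewrite mul0r.
Qed.

Lemma riesz0 y : riesz y 0 = 0.
Proof. by rewrite /riesz msupp0 big_nil. Qed.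

Lemma rieszD y p q : riesz y (p + q) = riesz y p + riesz y q.
Proof.
pose k := maxn (msize (p + q)) (maxn (msize p) (msize q)).
rewrite !(@rieszE y _ k) ?leq_maxl ?leq_max ?leqnn ?orbT // -big_split /=.
by apply: eq_bigr => m _; rewrite mcoeffD mulrDl.
Qed.

Lemma rieszZ y c p : riesz y (c *: p) = c * riesz y p.
Proof.
rewrite !(@rieszE y _ (msize p)) ?msizeZ_le // mulr_sumr.
by apply: eq_bigr => m _; rewrite mcoeffZ mulrA.
Qed.

Lemma rieszB y p q : riesz y (p - q) = riesz y p - riesz y q.
Proof. by rewrite rieszD -scaleN1r rieszZ mulN1r. Qed.

Lemma riesz_sum y (I : Type) (r : seq I) (P : pred I) (F : I -> {mpoly R[n]}) :
  riesz y (\sum_(i <- r | P i) F i) = \sum_(i <- r | P i) riesz y (F i).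
Proof. exact: (big_morph _ (rieszD y) (riesz0 y)). Qed.

Lemma rieszX y m : riesz y 'X_[m] = y m.
Proof. by rewrite /riesz msuppX big_seq1 mcoeffX eqxx mul1r. Qed.

Lemma deg_leW p k k' : deg_le p k -> (k <= k')%N -> deg_le p k'.
Proof. by rewrite /deg_le => dp le_kk'; apply: leq_trans dp _. Qed.

Lemma deg_le0 k : deg_le (0 : {mpoly R[n]}) k.
Proof. by rewrite /deg_le msize0. Qed.

Lemma deg_leX m : deg_le ('X_[m] : {mpoly R[n]}) (mdeg m).
Proof. by rewrite /deg_le msizeX. Qed.

Lemma deg_leD p q k : deg_le p k -> deg_le q k -> deg_le (p + q) k.
Proof.
move=> dp dq; apply: leq_trans (msizeD_le _ _) _.
by rewrite geq_max dp dq.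
Qed.

Lemma deg_leZ c p k : deg_le p k -> deg_le (c *: p) k.
Proof. rewrite /deg_le; exact/leq_trans/msizeZ_le. Qed.

Lemma deg_leM p q k k' : deg_le p k -> deg_le q k' -> deg_le (p * q) (k + k').
Proof.
rewrite /deg_le => dp dq.
have [->|p_neq0] := eqVneq p 0; first by rewrite mul0r msize0.
have [->|q_neq0] := eqVneq q 0; first by rewrite mulr0 msize0.
rewrite msizeM // -subn1 leq_subLR; apply: leq_trans (leq_add dp dq) _.
by rewrite addSn addnS.
Qed.

Lemma deg_le_sum (I : Type) (r : seq I) (P : pred I) (F : I -> {mpoly R[n]}) k :
  (forall i, P i -> deg_le (F i) k) -> deg_le (\sum_(i <- r | P i) F i) k.
Proof.
move=> dF; apply: (big_ind (fun p => deg_le p k)) => //; first exact: deg_le0.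
by move=> p q; exact: deg_leD.
Qed.

Lemma is_sos0 : is_sos (0 : {mpoly R[n]}).
Proof. by exists [::]; rewrite big_nil. Qed.

Lemma is_sos_sqr p : is_sos (p ^+ 2).
Proof. by exists [:: p]; rewrite big_seq1. Qed.

Lemma is_sos_mulsqr p s : is_sos s -> is_sos (p ^+ 2 * s).
Proof.
case=> S ->; exists (map (fun q => p * q) S).
by rewrite big_map mulr_sumr; apply: eq_bigr => q _; rewrite exprMn.
Qed.

Section QuadraticModule.
Variables (r : nat) (g : 'I_r -> {mpoly R[n]}).

Lemma in_qmoduleW k k' q : in_qmodule g k q -> (k <= k')%N -> in_qmodule g k' q.
Proof.
case=> s0 [s [sos_s0 deg_s0 sos_s ->]] le_kk'; exists s0, s; split => //.
- exact: deg_leW le_kk'.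
- by move=> i; have [? ?] := sos_s i; split => //; exact: deg_leW le_kk'.
Qed.

Lemma in_qmodule_deg_le k q : in_qmodule g k q -> deg_le q k.
Proof.
case=> s0 [s [_ deg_s0 sos_s ->]]; apply: deg_leD => //.
by apply: deg_le_sum => i _; case: (sos_s i).
Qed.

Lemma in_qmodule_mulsqr k k' q p :
  in_qmodule g k q -> deg_le p k' -> in_qmodule g (k' + k' + k) (p ^+ 2 * q).
Proof.
case=> s0 [s [sos_s0 deg_s0 sos_s ->]] dp.
have dp2 : deg_le (p ^+ 2) (k' + k') by rewrite expr2; exact: deg_leM.
exists (p ^+ 2 * s0), (fun i => p ^+ 2 * s i); split.
- exact: is_sos_mulsqr.
- exact: deg_leM.
- move=> i; have [sos_si deg_si] := sos_s i; split; first exact: is_sos_mulsqr.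
  by rewrite -mulrA; exact: deg_leM.
- by rewrite mulrDr mulr_sumr; congr (_ + _); apply: eq_bigr => i _; rewrite mulrA.
Qed.

Lemma in_L1_sos_ge0 k y p : in_L1 g k y -> is_sos p -> deg_le p k -> 0 <= riesz y p.
Proof.
case=> L_ge0 _ sos_p deg_p; apply: L_ge0.
exists p, (fun _ => 0); split => //.
- by move=> i; split; [exact: is_sos0 | rewrite mul0r; exact: deg_le0].
- by rewrite big1 ?addr0 // => i _; rewrite mul0r.
Qed.

End QuadraticModule.

Lemma mcoeff_ball (c : R) (i : 'I_n) : (c *: 1 - sqnormX R n)@_(U_(i) *+ 2) = -1.
Proof.
have U2_neq0 : (U_(i) *+ 2 == 0 :> 'X_{1..n})%MM = false.
  by apply/negbTE; rewrite -mdeg_eq0 mdegMn mdeg1.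
rewrite mcoeffB mcoeffZ mcoeff1 U2_neq0 mulr0 add0r raddf_sum /=; congr (- _).
rewrite (bigD1 i) //= mpolyXn mcoeffX eqxx big1 ?addr0 // => j ji.
rewrite mpolyXn mcoeffX; case: eqP => // /mnmP /(_ j).
by rewrite !mulmnE !mnm1E eqxx eq_sym (negbTE ji).
Qed.

Lemma deg_le_ball (c : R) k : 'I_n -> deg_le (c *: 1 - sqnormX R n) k -> (2 <= k)%N.
Proof.
move=> i dq; rewrite -ltnS; apply: leq_trans dq.
have deg_U2 : mdeg (U_(i) *+ 2)%MM = 2 by rewrite mdegMn mdeg1.
rewrite -[X in (X < _)%N]deg_U2.
by apply: msize_mdeg_lt; rewrite mcoeff_msupp mcoeff_ball oppr_eq0 oner_eq0.
Qed.

End Polynomials.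

Section Moments.
Variables (R : rcfType) (n r : nat) (g : 'I_r -> {mpoly R[n]}) (l : nat).
Variable y : 'X_{1..n} -> R.
Hypothesis y_in_L1 : in_L1 g l y.

Lemma moment_even_ge0 (m : 'X_{1..n}) : (2 * mdeg m <= l)%N -> 0 <= y (m *+ 2)%MM.
Proof.
move=> deg_m; rewrite -rieszX -mpolyXn.
apply: (in_L1_sos_ge0 y_in_L1 (is_sos_sqr _)); rewrite expr2.
by apply: deg_leW (deg_leM (deg_leX R m) (deg_leX R m)) _; lia.
Qed.

Lemma moment_cauchy_schwarz (a b : 'X_{1..n}) :
  (2 * mdeg a <= l)%N -> (2 * mdeg b <= l)%N ->
  y (a + b)%MM ^+ 2 <= y (a *+ 2)%MM * y (b *+ 2)%MM.
Proof.
move=> deg_a deg_b; apply: quad_ge0_sqr_le => u v.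
pose p : {mpoly R[n]} := u *: 'X_[a] + v *: 'X_[b].
have p_sqr : p ^+ 2 =
    u ^+ 2 *: 'X_[a *+ 2] + (2 * u * v) *: 'X_[a + b] + v ^+ 2 *: 'X_[b *+ 2].
  rewrite /p -!mul_mpolyC !rmorphXn !rmorphM /= rmorph_nat -!mpolyXn mpolyXD.
  ring.
have deg_p : deg_le p (maxn (mdeg a) (mdeg b)).
  apply: deg_leD; apply: deg_leZ; apply: deg_leW (deg_leX R _) _.
    exact: leq_maxl.
  exact: leq_maxr.
have := in_L1_sos_ge0 y_in_L1 (is_sos_sqr p).
rewrite p_sqr !rieszD !rieszZ !rieszX; apply.
by rewrite -p_sqr expr2; apply: deg_leW (deg_leM deg_p deg_p) _; lia.
Qed.

Lemma moment_localizing (r0 : R) (l0 : nat) (b : 'X_{1..n}) :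
  in_qmodule g l0 (r0 ^+ 2 *: 1 - sqnormX R n) -> (2 * mdeg b + l0 <= l)%N ->
  \sum_(i < n) y ((b + U_(i)) *+ 2)%MM <= r0 ^+ 2 * y (b *+ 2)%MM.
Proof.
move=> ball deg_b.
have ball_b : in_qmodule g l ('X_[b] ^+ 2 * (r0 ^+ 2 *: 1 - sqnormX R n)).
  by apply: in_qmoduleW (in_qmodule_mulsqr ball (deg_leX R b)) _; lia.
have expand : 'X_[b] ^+ 2 * (r0 ^+ 2 *: 1 - sqnormX R n) =
    r0 ^+ 2 *: 'X_[b *+ 2] - \sum_(i < n) 'X_[(b + U_(i)) *+ 2].
  rewrite mulrBr -scalerAr mulr1 mpolyXn /sqnormX mulr_sumr; congr (_ - _).
  apply: eq_bigr => i _; rewrite !mpolyXn -mpolyXD; congr 'X_[_].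
  by apply/mnmP => j; rewrite !(mnmDE, mulmnE) mulnDl.
move/(proj1 y_in_L1): ball_b.
rewrite expand rieszB rieszZ rieszX riesz_sum subr_ge0.
by under eq_bigr do rewrite rieszX.
Qed.

Section MomentBound.
Variables (r0 : R) (l0 t : nat).
Hypothesis ball : in_qmodule g l0 (r0 ^+ 2 *: 1 - sqnormX R n).
Hypothesis deg_tl : (2 * t + l0 <= l + 2)%N.

(* r0^2 - ||X||^2 has degree 2, so l0 >= 2 unless there are no variables. *)
Lemma double_mdeg_le (m : 'X_{1..n}) : (mdeg m <= t)%N -> (2 * mdeg m <= l)%N.
Proof.
move=> deg_m; case: (pickP (fun _ : 'I_n => true)) => [i _|no_var].
  by have := deg_le_ball i (in_qmodule_deg_le ball); lia.
suff -> : m = 0%MM by rewrite mdeg0.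
by apply/mnmP => i; have := no_var i.
Qed.

Lemma bounded_even_moment_ge0 (c : 'X_{1..n < t.+1}) : 0 <= y (val c *+ 2)%MM.
Proof. by apply/moment_even_ge0/double_mdeg_le; rewrite -ltnS bmdeg. Qed.

Definition diag_moment_sum k :=
  \sum_(c : 'X_{1..n < t.+1} | mdeg c == k) y (val c *+ 2)%MM.

Lemma diag_moment_sumS_le k : (k < t)%N ->
  diag_moment_sum k.+1 <=
  \sum_(b : 'X_{1..n < t.+1} | mdeg b == k) \sum_(i < n) y ((val b + U_(i)) *+ 2)%MM.
Proof.
move=> lt_kt; rewrite pair_big_dep /=.
under [X in _ <= X]eq_bigl => p do rewrite andbT.
apply: (ler_sum_witness (witness := fun p c => (val p.1 + U_(p.2))%MM == val c)).
- move=> [b i] /= /eqP deg_b; apply/moment_even_ge0/double_mdeg_le.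
  by rewrite mdegD mdeg1 deg_b addn1.
- move=> c /eqP deg_c.
  have [i c_i_gt0] : exists i, (0 < val c i)%N by apply: mdeg_neq0_exists; rewrite deg_c.
  have le_Uc : (U_(i) <= val c)%MM by rewrite lep1mP -lt0n.
  have deg_cU : mdeg (val c - U_(i))%MM = k.
    by have := congr1 mdeg (submK le_Uc); rewrite mdegD mdeg1 deg_c addn1 => -[].
  have lt_cU : (mdeg (val c - U_(i))%MM < t.+1)%N by rewrite deg_cU; lia.
  by exists (BMultinom lt_cU, i); rewrite /= deg_cU submK.
- by move=> [b i] c c' /= /eqP bU_c /eqP bU_c'; apply: val_inj; rewrite /= -bU_c -bU_c'.
Qed.

Lemma diag_moment_sum_le k : (k <= t)%N -> diag_moment_sum k <= r0 ^+ (2 * k).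
Proof.
elim: k => [|k IH] le_kt.
  rewrite /diag_moment_sum (big_pred1 bm0) => [|c]; last by rewrite /= mdeg_eq0.
  by rewrite -rieszX -mpolyXn mpolyX0 expr1n (proj2 y_in_L1).
apply: le_trans (diag_moment_sumS_le le_kt) _.
apply: (@le_trans _ _ (\sum_(b : 'X_{1..n < t.+1} | mdeg b == k) r0 ^+ 2 * y (val b *+ 2)%MM)).
  apply: ler_sum => b /eqP deg_b; apply: moment_localizing ball _.
  by rewrite deg_b; lia.
rewrite -mulr_sumr mulnS exprD ler_wpM2l ?sqr_ge0 //.
by apply: IH; lia.
Qed.

Lemma sum_even_moments_le :
  \sum_(c : 'X_{1..n < t.+1}) y (val c *+ 2)%MM <= \sum_(k < t.+1) r0 ^+ (2 * k).
Proof.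
rewrite (partition_big (fun c : 'X_{1..n < t.+1} => Ordinal (bmdeg c)) predT) //=.
by apply: ler_sum => k _; exact: diag_moment_sum_le (ltn_ord k).
Qed.

Lemma sum_sqr_moments_le :
  \sum_(m : 'X_{1..n < (2 * t).+1}) y (val m) ^+ 2 <=
  (\sum_(c : 'X_{1..n < t.+1}) y (val c *+ 2)%MM) ^+ 2.
Proof.
rewrite expr2 mulr_suml; under [X in _ <= X]eq_bigr do rewrite mulr_sumr.
rewrite pair_bigA /=.
apply: (ler_sum_witness (witness := fun ab m => (val ab.1 + val ab.2)%MM == val m)).
- by move=> [a b] _; apply: mulr_ge0; exact: bounded_even_moment_ge0.
- move=> m _.
  have [a le_am deg_a] := exists_lepm_mdeg (geq_minl (mdeg (val m)) t).
  have lt_a : (mdeg a < t.+1)%N by rewrite deg_a ltnS geq_minr.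
  have deg_ma : mdeg (val m - a)%MM = (mdeg (val m) - minn (mdeg (val m)) t)%N.
    by have := congr1 mdeg (submK le_am); rewrite mdegD deg_a; lia.
  have lt_ma : (mdeg (val m - a)%MM < t.+1)%N.
    by have : (mdeg (val m) < (2 * t).+1)%N := bmdeg m; rewrite deg_ma; lia.
  exists (BMultinom lt_a, BMultinom lt_ma); rewrite /= addmC submK //; split => //.
  rewrite -{1}(submK le_am) addmC.
  by apply: moment_cauchy_schwarz; apply: double_mdeg_le; rewrite -ltnS.
- by move=> ab m m' /eqP ab_m /eqP ab_m'; apply: val_inj; rewrite /= -ab_m -ab_m'.
Qed.

Lemma trunc_norm_le_geom : trunc_norm y t <= \sum_(k < t.+1) r0 ^+ (2 * k).
Proof.
have S_ge0 := sum_even_powers_ge0 r0 t.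
rewrite /trunc_norm -(ger0_norm S_ge0) -sqrtr_sqr ler_sqrt ?sqr_ge0 //.
apply: le_trans sum_sqr_moments_le _; rewrite ler_sqr ?nnegrE ?sum_even_moments_le //.
by apply: sumr_ge0 => c _; exact: bounded_even_moment_ge0.
Qed.

End MomentBound.
End Moments.

Theorem mainTheorem16 (R : rcfType) (n r : nat) (g : 'I_r -> {mpoly R[n]})
    (r0 : R) (l0 : nat) :
  0 < r0 ->
  in_qmodule g l0 (r0 ^+ 2 *: 1 - sqnormX R n) ->
  forall (t l : nat), (2 * t + l0 <= l + 2)%N ->
  forall y : 'X_{1..n} -> R, in_L1 g l y ->
  trunc_norm y t <= Num.sqrt ('C(n + t, t))%:R * \sum_(k < t.+1) r0 ^+ (2 * k).
Proof.
move=> _ ball t l deg_tl y y_in_L1.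
apply: le_trans (trunc_norm_le_geom y_in_L1 ball deg_tl) _.
apply: ler_peMl; first exact: sum_even_powers_ge0.
by rewrite -[X in X <= _]sqrtr1 ler_sqrt ?ler0n // ler1n bin_gt0 leq_addl.
Qed.
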